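(* Let $G$ be a group. (i) If $\leq$ is a quasi-total order on $G$, then $\leq$ is admissible and for every dominant $g\in G^{++}$ the growth function $\gamma_g$ is a nonzero homogeneous quasimorphism. (ii) Conversely, for every nonzero homogeneous quasimorphism $f:G\to\mathbb{R}$ there exist a quasi-total order $\leq$ on $G$ and a dominant $g\in G^{++}$ of $(G,\leq)$ such that $f$ is a positive multiple of the growth function $\gamma_g$ of $\leq$.
   Context: A partial order $\leq$ on a group $G$ is bi-invariant if $g\leq h$ implies $gk\leq hk$ and $kg\leq kh$ for all $g,h,k\in G$. Its order semigroup is $G^+=\{g\in G: g\geq e\}$, and its set of dominants is $G^{++}=\{g\in G^+\setminus\{e\}: \forall h\in G\ \exists n\in\mathbb{N}_0,\ g^n\geq h\}$; the order is admissible if $G^{++}\neq\emptyset$. For $g\in G^{++}$ the growth function is $\gamma_g(h)=\lim_{n\to\infty}\frac{1}{n}\inf\{p\in\mathbb{Z}: g^p\geq h^n\}$. A map $f:G\to\mathbb{R}$ is a quasimorphism if $\sup_{h,k}|f(hk)-f(h)-f(k)|<\infty$, and homogeneous if $f(h^n)=nf(h)$ for all $n\in\mathbb{N}$. A half-space filtration of a set $X$ is a family $\{H_n\}_{n\in\mathbb{Z}}$ of subsets with $H_{n+1}\subsetneq H_n$ for all $n$, $\bigcap_n H_n=\emptyset$ and $\bigcup_n H_n=X$. The height of $a\in X$ is $h(a)=\sup\{n\in\mathbb{Z}: a\in H_n\}$, and $h(a,b)=h(a)-h(b)$. A triple $(X,\preceq,\{H_n\})$ is a half-space order if $(X,\preceq)$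 is a poset, $\{H_n\}$ is a half-space filtration of $X$, and there is a constant $w$ with $h(a,b)\geq w\Rightarrow a\succeq b$ for all $a,b\in X$. An action of a group $G$ on $X$ (by bijections, not necessarily order-preserving) is by quasi-automorphisms if there is $d$ with $|h(ga,gb)-h(a,b)|\leq d$ for all $g\in G$, $a,b\in X$; it is unbounded if there exist $g\in G$, $a\in X$ with $h(g^n a)\to\pm\infty$ as $n\to\pm\infty$. Given an effective $G$-action on a poset $(X,\preceq)$, the induced order on $G$ is $g\leq h :\Leftrightarrow \forall k\in G\ \forall x\in X:\ (kg).x\preceq (kh).x$; it is bi-invariant. A quasi-total order on $G$ is an order induced in this way from an effective, unbounded action by quasi-automorphisms of $G$ on some half-space order. *)

From HB Require Import structures.
From mathcomp Require Import ssreflect ssrfun ssrbool eqtype choice ssrnat seq.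
From mathcomp Require Import monoid.
From Stdlib Require Import ZArith Reals.

Set Implicit Arguments.
Unset Strict Implicit.
Unset Printing Implicit Defensive.

Local Open Scope group_scope.

Definition zpowg (G : groupType) (g : G) (p : Z) : G :=
  match p with
  | Z0 => 1
  | Zpos q => g ^+ Pos.to_nat q
  | Zneg q => (g ^+ Pos.to_nat q)^-1
  end.

Definition bi_invariant_order (G : groupType) (le : G -> G -> Prop) : Prop :=
  (forall g, le g g) /\
  (forall g h, le g h -> le h g -> g = h) /\
  (forall g h k, le g h -> le h k -> le g k) /\
  (forall g h k, le g h -> le (g * k) (h * k) /\ le (k * g) (k * h)).

Definition dominant (G : groupType) (le : G -> G -> Prop) (g : G) : Prop :=
  le 1 g /\ g <> 1 /\ forall h : G, exists n : nat, le h (g ^+ n).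

Definition admissible (G : groupType) (le : G -> G -> Prop) : Prop :=
  exists g : G, dominant le g.

(** [p] is the infimum (attained, i.e. minimum) of { p in Z : g^p >= h^n }. *)
Definition is_min_exponent (G : groupType) (le : G -> G -> Prop)
    (g h : G) (n : nat) (p : Z) : Prop :=
  le (h ^+ n) (zpowg g p) /\
  forall q : Z, le (h ^+ n) (zpowg g q) -> (p <= q)%Z.

(** [growth le g h r] : gamma_g(h) exists and equals r, i.e. the infima
    a_n = inf { p in Z : g^p >= h^n } are finite and a_n / n --> r. *)
Definition growth (G : groupType) (le : G -> G -> Prop) (g h : G) (r : R) : Prop :=
  exists a : nat -> Z,
    (forall n, is_min_exponent le g h n (a n)) /\
    Un_cv (fun n => (IZR (a n) / INR n)%R) r.

Definition quasimorphism (G : groupType) (f : G -> R) : Prop :=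
  exists D : R, forall h k : G, (Rabs (f (h * k)%g - f h - f k) <= D)%R.

Definition homogeneous (G : groupType) (f : G -> R) : Prop :=
  forall (h : G) (n : nat), f (h ^+ n) = (INR n * f h)%R.

Definition nonzero_fun (G : Type) (f : G -> R) : Prop :=
  exists h : G, f h <> 0%R.

Definition poset (X : Type) (le : X -> X -> Prop) : Prop :=
  (forall a, le a a) /\
  (forall a b, le a b -> le b a -> a = b) /\
  (forall a b c, le a b -> le b c -> le a c).

Definition half_space_filtration (X : Type) (H : Z -> X -> Prop) : Prop :=
  (forall n, (forall a, H (n + 1)%Z a -> H n a) /\ exists a, H n a /\ ~ H (n + 1)%Z a) /\
  (forall a, ~ (forall n, H n a)) /\
  (forall a, exists n, H n a).

(** [height H a n] : h(a) = sup { n : a in H_n } = n (the sup is attained). *)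
Definition height (X : Type) (H : Z -> X -> Prop) (a : X) (n : Z) : Prop :=
  H n a /\ forall m, H m a -> (m <= n)%Z.

Definition half_space_order (X : Type) (le : X -> X -> Prop)
    (H : Z -> X -> Prop) : Prop :=
  poset le /\ half_space_filtration H /\
  exists w : R, forall (a b : X) (ha hb : Z),
    height H a ha -> height H b hb -> (IZR (ha - hb) >= w)%R -> le b a.

(** Group actions (by bijections; bijectivity follows from the action laws). *)
Definition group_action (G : groupType) (X : Type) (act : G -> X -> X) : Prop :=
  (forall x, act 1 x = x) /\ (forall g h x, act (g * h) x = act g (act h x)).

Definition effective_action (G : groupType) (X : Type) (act : G -> X -> X) : Prop :=
  forall g : G, (forall x, act g x = x) -> g = 1.

Definition quasi_automorphism_action (G : groupType) (X : Type)
    (H : Z -> X -> Prop) (act : G -> X -> X) : Prop :=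
  exists d : R, forall (g : G) (a b : X) (hga hgb ha hb : Z),
    height H (act g a) hga -> height H (act g b) hgb ->
    height H a ha -> height H b hb ->
    (Rabs (IZR ((hga - hgb) - (ha - hb))) <= d)%R.

Definition unbounded_action (G : groupType) (X : Type)
    (H : Z -> X -> Prop) (act : G -> X -> X) : Prop :=
  exists (g : G) (a : X),
    (forall M : Z, exists N : Z, forall (n hn : Z),
        (n >= N)%Z -> height H (act (zpowg g n) a) hn -> (hn >= M)%Z) /\
    (forall M : Z, exists N : Z, forall (n hn : Z),
        (n <= N)%Z -> height H (act (zpowg g n) a) hn -> (hn <= M)%Z).

Definition induced_order (G : groupType) (X : Type) (leX : X -> X -> Prop)
    (act : G -> X -> X) (g h : G) : Prop :=
  forall (k : G) (x : X), leX (act (k * g) x) (act (k * h) x).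

Definition quasi_total_order (G : groupType) (le : G -> G -> Prop) : Prop :=
  exists (X : Type) (leX : X -> X -> Prop) (H : Z -> X -> Prop) (act : G -> X -> X),
    half_space_order leX H /\ group_action act /\ effective_action act /\
    quasi_automorphism_action H act /\ unbounded_action H act /\
    forall g h : G, le g h <-> induced_order leX act g h.

From mathcomp Require Import ssreflect ssrfun ssrbool monoid.
From Stdlib Require Import ZArith Reals Lia Lra Classical IndefiniteDescription.

(* Fix a base point a of the half-space order. The displacement phi(x) = h(x.a) - h(a)
   is a quasimorphism (the action moves heights by a bounded amount), and it detects the
   induced order coarsely: x <= y forces phi x <= phi y + B, while phi y - phi x >= B
   forces x <= y, because the height gap w of the half-space order then holds at every
   point k.z. Homogenizing phi preserves all of this. For any order coarsely detected by
   a homogeneous quasimorphism f and any g with f g > 0, the least p with g^p >= h^n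
   satisfies |p f(g) - n f(h)| <= |B| + f(g), so gamma_g = f / f(g); this gives (i).
   Conversely, a nonzero homogeneous quasimorphism f turns G x Z into a half-space order
   with height floor(f x) + m, on which G acts by left translation on the first factor;
   the induced order is coarsely detected by f, which gives (ii) with c = f(g). *)

Local Open Scope R_scope.

Lemma zpowg_nat (G : groupType) (g : G) (n : nat) : zpowg g (Z.of_nat n) = (g ^+ n)%g.
Proof. by case: n => [|n] //=; rewrite SuccNat2Pos.id_succ. Qed.

Lemma Rabs_le_bounds {u c : R} : Rabs u <= c -> - c <= u <= c.
Proof. by move=> Hu; have := Rle_abs u; have := Rle_abs (- u); rewrite Rabs_Ropp; lra. Qed.

Lemma Rabs_div_le (a c e : R) : 0 < c -> Rabs a <= e * c -> Rabs (a / c) <= e.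
Proof.
  move=> Hc Ha; rewrite Rabs_mult Rabs_inv (Rabs_pos_eq c); last lra.
  apply: (Rmult_le_reg_r c) => //; rewrite Rmult_assoc Rinv_l; lra.
Qed.

Lemma nat_archimedean (c r : R) : 0 < c -> exists n : nat, r <= INR n * c.
Proof.
  move=> Hc; have [n Hn] := INR_unbounded (r / c); exists n.
  have := Rmult_le_compat_r c _ _ (Rlt_le _ _ Hc) (Rlt_le _ _ Hn).
  by have -> : r / c * c = r by field; lra.
Qed.

Lemma Z_archimedean (c r : R) : 0 < c -> exists N : Z, r <= IZR N * c.
Proof.
  by move=> Hc; have [n Hn] := nat_archimedean _ r Hc; exists (Z.of_nat n); rewrite -INR_IZR_INZ.
Qed.

Lemma eq0_of_bounded_multiples (t M : R) : (forall n : nat, INR n * Rabs t <= M) -> t = 0.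
Proof.
  move=> Hbound; apply: NNPP => Ht.
  have [n Hn] := nat_archimedean _ (M + 1) (Rabs_pos_lt _ Ht).
  have := Hbound n; lra.
Qed.

Lemma Z_least_elt (P : Z -> Prop) (p0 L : Z) :
  P p0 -> (forall p, P p -> (L <= p)%Z) -> exists m, P m /\ forall q, P q -> (m <= q)%Z.
Proof.
  move=> Pp0 PL.
  suff least_below : forall (k : nat) p, P p -> (p - L <= Z.of_nat k)%Z ->
      exists m, P m /\ forall q, P q -> (m <= q)%Z.
  { apply: (least_below (Z.to_nat (p0 - L)) p0 Pp0); lia. }
  elim=> [|k IH] p Pp Hk.
  - by exists p; split => // q Pq; have := PL q Pq; lia.
  - case: (classic (exists q, P q /\ (q < p)%Z)) => [[q [Pq Hqp]]|Hmin].
    + by apply: (IH q Pq); lia.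
    + exists p; split => // q Pq; apply/Z.nlt_ge => Hqp.
      by apply: Hmin; exists q.
Qed.

Lemma Un_cv_div_of_bounded_error (a : nat -> R) (r K : R) :
  (forall n, Rabs (a n - INR n * r) <= K) -> Un_cv (fun n => a n / INR n) r.
Proof.
  move=> Hbound eps Heps.
  have HK : 0 <= K by apply: Rle_trans (Hbound O); apply: Rabs_pos.
  have [N HN] := nat_archimedean _ (K + 1) Heps.
  exists N => n Hn; rewrite /R_dist.
  have HNn : INR N <= INR n by apply: le_INR.
  have Hn0 : 0 < INR n by nra.
  have -> : a n / INR n - r = (a n - INR n * r) / INR n by field; lra.
  apply: Rle_lt_trans (Rabs_div_le _ _ (K / INR n) Hn0 _) _.
  - by have -> : K / INR n * INR n = K by field; lra.
  - apply: (Rmult_lt_reg_r (INR n)) => //.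
    have -> : K / INR n * INR n = K by field; lra.
    nra.
Qed.

Lemma Un_cv_bounded_dist {v : nat -> R} {l c e : R} :
  Un_cv v l -> (forall m, Rabs (v m - c) <= e) -> Rabs (l - c) <= e.
Proof.
  move=> Hv Hb.
  have Hconst x : Un_cv (fun _ => x) x.
  { by move=> eps Heps; exists O => n _; rewrite /R_dist Rminus_diag Rabs_R0. }
  have Hvm m : c - e <= v m <= c + e by have := Rabs_le_bounds (Hb m); lra.
  apply: Rabs_le; split.
  - have := Rle_cv_lim (fun m => proj1 (Hvm m)) (Hconst (c - e)) Hv; lra.
  - have := Rle_cv_lim (fun m => proj2 (Hvm m)) Hv (Hconst (c + e)); lra.
Qed.

Lemma Un_cv_subseq_mul {u : nat -> R} {l : R} (n : nat) :
  (1 <= n)%nat -> Un_cv u l -> Un_cv (fun m => u (n * S m)%nat) l.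
Proof.
  move=> Hn Hu eps Heps; have [N HN] := Hu eps Heps.
  by exists N => m Hm; apply: HN; nia.
Qed.

Section Homogenization.
Context {G : groupType} {phi : G -> R} {K : R}.
Hypothesis phi_pow :
  forall (x : G) (n : nat), Rabs (phi (x ^+ n)%g - INR n * phi x) <= INR n * K.

Let avg (x : G) (n : nat) : R := phi (x ^+ n)%g / INR n.

Lemma pow_defect_ge0 : 0 <= K.
Proof. by have := phi_pow 1%g 1; rewrite expg1 Rmult_1_l Rminus_diag Rabs_R0 /= Rmult_1_l. Qed.

Lemma avg_mul_dist x n m : (1 <= n)%nat -> (1 <= m)%nat ->
  Rabs (avg x (n * m) - avg x n) <= K / INR n.
Proof.
  move=> Hn Hm.
  have Hn0 : 0 < INR n by apply: lt_0_INR; lia.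
  have Hm0 : 0 < INR m by apply: lt_0_INR; lia.
  have -> : avg x (n * m) = phi (x ^+ n ^+ m)%g / (INR n * INR m).
  { by rewrite /avg expgnA mult_INR. }
  have -> : phi (x ^+ n ^+ m)%g / (INR n * INR m) - avg x n
          = (phi (x ^+ n ^+ m)%g - INR m * phi (x ^+ n)%g) / (INR n * INR m).
  { by rewrite /avg; field; lra. }
  apply: Rabs_div_le; first nra.
  by have -> : K / INR n * (INR n * INR m) = INR m * K by field; lra.
Qed.

Lemma avg_dist x n m : (1 <= n)%nat -> (1 <= m)%nat ->
  Rabs (avg x m - avg x n) <= K / INR n + K / INR m.
Proof.
  move=> Hn Hm.
  have Hnm := avg_mul_dist x n m Hn Hm; have Hmn := avg_mul_dist x m n Hm Hn.
  rewrite Nat.mul_comm in Hnm.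
  have := Rabs_triang (avg x m - avg x (m * n)) (avg x (m * n) - avg x n).
  rewrite Rabs_minus_sym in Hmn.
  have -> : avg x m - avg x (m * n) + (avg x (m * n) - avg x n) = avg x m - avg x n
    by ring.
  lra.
Qed.

Lemma avg_Cauchy x : Cauchy_crit (avg x).
Proof.
  move=> eps Heps.
  have HK := pow_defect_ge0.
  have [N HN] := nat_archimedean _ (2 * K + 1) Heps.
  have HN0 : 0 < INR N by nra.
  have HN1 : (1 <= N)%nat by destruct N; [simpl in HN0; lra | lia].
  exists N => n m Hn Hm; rewrite /R_dist.
  have HKn p : (p >= N)%nat -> K / INR p <= K / INR N.
  { move=> Hp; apply: Rmult_le_compat_l => //.
    by apply: Rinv_le_contravar => //; apply: le_INR. }
  have := avg_dist x m n ltac:(lia) ltac:(lia).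
  have := HKn n Hn; have := HKn m Hm.
  have : 2 * (K / INR N) < eps.
  { apply: (Rmult_lt_reg_r (INR N)) => //.
    have -> : 2 * (K / INR N) * INR N = 2 * K by field; lra.
    lra. }
  lra.
Qed.

Lemma homogenization_limit :
  exists psi : G -> R, forall x n, Rabs (INR n * psi x - phi (x ^+ n)%g) <= K.
Proof.
  exists (fun x => proj1_sig (R_complete _ (avg_Cauchy x))) => x n.
  case: (R_complete _ (avg_Cauchy x)) => l Hl /=.
  case: n => [|n].
  - have := phi_pow x 0; rewrite /= !Rmult_0_l Rminus_0_r Rminus_0_l Rabs_Ropp => H0.
    have := pow_defect_ge0; lra.
  - have Hn0 : 0 < INR (S n) by apply: lt_0_INR; lia.
    have Hl_n := Un_cv_bounded_dist (Un_cv_subseq_mul (S n) ltac:(lia) Hl)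
      (fun m => avg_mul_dist x (S n) (S m) ltac:(lia) ltac:(lia)).
    have -> : INR (S n) * l - phi (x ^+ S n)%g = INR (S n) * (l - avg x (S n)).
    { by rewrite /avg; field; lra. }
    rewrite Rabs_mult (Rabs_pos_eq (INR (S n))); last lra.
    apply: (Rle_trans _ (INR (S n) * (K / INR (S n)))); first by apply: Rmult_le_compat_l; lra.
    by right; field; lra.
Qed.

End Homogenization.

Lemma quasimorphism_pow_dist {G : groupType} {phi : G -> R} {D : R} :
  (forall x y, Rabs (phi (x * y)%g - phi x - phi y) <= D) -> phi 1%g = 0 ->
  forall (x : G) (n : nat), Rabs (phi (x ^+ n)%g - INR n * phi x) <= INR n * D.
Proof.
  move=> Hdefect Hphi1 x; elim=> [|n IH].
  - by rewrite expg0 Hphi1 /= !Rmult_0_l Rminus_0_r Rabs_R0; right.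
  - have Hstep : Rabs (phi (x ^+ S n)%g - phi (x ^+ n)%g - phi x) <= D.
    { by rewrite expgSr; apply: Hdefect. }
    have := Rabs_le_bounds Hstep; have := Rabs_le_bounds IH.
    rewrite S_INR !Rmult_plus_distr_r !Rmult_1_l => *; apply: Rabs_le; lra.
Qed.

Lemma homogenization {G : groupType} {phi : G -> R} {D : R} :
  (forall x y, Rabs (phi (x * y)%g - phi x - phi y) <= D) -> phi 1%g = 0 ->
  exists psi : G -> R,
    homogeneous psi /\ quasimorphism psi /\ forall x, Rabs (psi x - phi x) <= D.
Proof.
  move=> Hdefect Hphi1.
  have [psi Hpsi] := homogenization_limit (quasimorphism_pow_dist Hdefect Hphi1).
  have Hdist x : Rabs (psi x - phi x) <= D.
  { by have := Hpsi x 1%nat; rewrite expg1 /= Rmult_1_l Rabs_minus_sym. }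
  exists psi; split; [|split] => //.
  - move=> x k; apply: Rminus_diag_uniq; apply: (eq0_of_bounded_multiples _ (2 * D)) => n.
    rewrite -{1}(Rabs_pos_eq (INR n) (pos_INR n)) -Rabs_mult.
    have Hkn : Rabs (INR k * INR n * psi x - phi (x ^+ k ^+ n)%g) <= D.
    { by rewrite -expgnA -mult_INR; apply: Hpsi. }
    have := Rabs_le_bounds (Hpsi (x ^+ k)%g n); have := Rabs_le_bounds Hkn.
    move=> *; apply: Rabs_le; lra.
  - exists (D + 3 * D) => x y.
    have := Rabs_le_bounds (Hdefect x y).
    have := Rabs_le_bounds (Hdist (x * y)%g).
    have := Rabs_le_bounds (Hdist x); have := Rabs_le_bounds (Hdist y).
    move=> *; apply: Rabs_le; lra.
Qed.

Section HomogeneousQuasimorphism.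
Context {G : groupType} {f : G -> R}.
Hypotheses (f_hom : homogeneous f) (f_qm : quasimorphism f).

Lemma homogeneous1 : f 1%g = 0.
Proof. by have := f_hom 1%g 0%nat; rewrite expg0 Rmult_0_l. Qed.

Lemma homogeneousV x : f (x^-1)%g = - f x.
Proof.
  have [D HD] := f_qm.
  suff : f x + f (x^-1)%g = 0 by lra.
  apply: (eq0_of_bounded_multiples _ D) => n.
  have := HD (x ^+ n)%g (x^-1 ^+ n)%g.
  rewrite expVgn mulgV homogeneous1 !f_hom -expVgn f_hom.
  have -> : 0 - INR n * f x - INR n * f (x^-1)%g = - (INR n * (f x + f (x^-1)%g)) by ring.
  by rewrite Rabs_Ropp Rabs_mult (Rabs_pos_eq (INR n)) //; apply: pos_INR.
Qed.

Lemma homogeneous_zpowg x p : f (zpowg x p) = IZR p * f x.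
Proof.
  case: p => [|q|q] /=; first by rewrite homogeneous1 Rmult_0_l.
  - by rewrite f_hom INR_IPR.
  - by rewrite homogeneousV f_hom INR_IPR; change (IZR (Zneg q)) with (- IPR q); ring.
Qed.

Lemma homogeneous_pos_value : nonzero_fun f -> exists u, 0 < f u.
Proof.
  case=> u Hu; case: (Rlt_le_dec 0 (f u)) => Hsign; first by exists u.
  by exists (u^-1)%g; rewrite homogeneousV; lra.
Qed.

End HomogeneousQuasimorphism.

Lemma homogeneous_div (G : groupType) (f : G -> R) (c : R) :
  homogeneous f -> homogeneous (fun x => f x / c).
Proof. by move=> f_hom x n; rewrite f_hom /Rdiv Rmult_assoc. Qed.

Lemma quasimorphism_div (G : groupType) (f : G -> R) (c : R) :
  quasimorphism f -> quasimorphism (fun x => f x / c).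
Proof.
  case=> D HD; exists (D * Rabs (/ c)) => x y.
  have -> : f (x * y)%g / c - f x / c - f y / c = (f (x * y)%g - f x - f y) * / c
    by rewrite /Rdiv; ring.
  by rewrite Rabs_mult; apply: Rmult_le_compat_r => //; apply: Rabs_pos.
Qed.

Definition coarsely_compatible {G : groupType} (le : G -> G -> Prop) (f : G -> R) (B : R) : Prop :=
  (forall x y, le x y -> f x <= f y + B) /\ (forall x y, B <= f y - f x -> le x y).

Lemma coarsely_compatible_perturb {G : groupType} {le : G -> G -> Prop} {phi psi : G -> R}
    {B K : R} :
  coarsely_compatible le phi B -> (forall x, Rabs (psi x - phi x) <= K) ->
  coarsely_compatible le psi (B + 2 * K).
Proof.
  move=> [Hmono Hlarge] Hdist; split => x y.
  - move/Hmono; have := Rabs_le_bounds (Hdist x); have := Rabs_le_bounds (Hdist y); lra.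
  - move=> Hxy; apply: Hlarge.
    by have := Rabs_le_bounds (Hdist x); have := Rabs_le_bounds (Hdist y); lra.
Qed.

Section CoarseHeight.
Context {G : groupType} {le : G -> G -> Prop} {f : G -> R} {B : R}.
Hypotheses (f_compat : coarsely_compatible le f B) (f_hom : homogeneous f)
  (f_qm : quasimorphism f).

Lemma dominant_of_height g : B <= f g -> 0 < f g -> dominant le g.
Proof.
  move=> HBg Hg; have [_ Hlarge] := f_compat.
  split; [|split].
  - by apply: Hlarge; rewrite (homogeneous1 f_hom); lra.
  - by move=> Hg1; rewrite Hg1 (homogeneous1 f_hom) in Hg; lra.
  - move=> h; have [n Hn] := nat_archimedean _ (f h + B) Hg.
    by exists n; apply: Hlarge; rewrite f_hom; lra.
Qed.

Lemma exists_dominant_of_height : (exists u, 0 < f u) -> exists g, 0 < f g /\ dominant le g.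
Proof.
  case=> u Hu; have [n Hn] := nat_archimedean _ (Rabs B + 1) Hu.
  have Hg : Rabs B + 1 <= f (u ^+ n)%g by rewrite f_hom.
  have := Rle_abs B; have := Rabs_pos B => *.
  by exists (u ^+ n)%g; split; [|apply: dominant_of_height]; lra.
Qed.

Lemma dominant_height_pos g : (exists u, B < f u) -> dominant le g -> 0 < f g.
Proof.
  move=> [u Hu] [_ [_ Hdom]]; have [n Hn] := Hdom u.
  have := proj1 f_compat _ _ Hn; rewrite f_hom => Hun.
  by have := pos_INR n; nra.
Qed.

Lemma min_exponent_approx g y : 0 < f g -> dominant le g ->
  exists p : Z, (le y (zpowg g p) /\ forall q, le y (zpowg g q) -> (p <= q)%Z) /\
    Rabs (IZR p * f g - f y) <= Rabs B + f g.
Proof.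
  move=> Hg [_ [_ Hdom]]; have [Hmono Hlarge] := f_compat.
  have Hbelow q : le y (zpowg g q) -> f y - B <= IZR q * f g.
  { by move/Hmono; rewrite (homogeneous_zpowg f_hom f_qm); lra. }
  have [N HN] := Z_archimedean _ (B - f y) Hg.
  have [n Hn] := Hdom y.
  have [p [Hp Hmin]] := Z_least_elt (fun q => le y (zpowg g q)) (Z.of_nat n) (- N)
    ltac:(by rewrite /= zpowg_nat)
    (fun q Hq => ltac:(apply: le_IZR; rewrite opp_IZR; have := Hbelow q Hq; nra)).
  exists p; split => //.
  have Hup := Hbelow p Hp.
  have Hlow : IZR (p - 1) * f g - f y < B.
  { apply: Rnot_le_lt => Hge.
    have Hle : le y (zpowg g (p - 1)) by apply: Hlarge; rewrite (homogeneous_zpowg f_hom f_qm).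
    by have := Hmin _ Hle; lia. }
  rewrite minus_IZR in Hlow; have := Rle_abs B; have := Rabs_pos B => *.
  by apply: Rabs_le; lra.
Qed.

Lemma growth_of_height g : 0 < f g -> dominant le g -> forall h, growth le g h (f h / f g).
Proof.
  move=> Hg Hdom h.
  have [a Ha] := functional_choice _ (fun n => min_exponent_approx g (h ^+ n)%g Hg Hdom).
  exists a; split; first by move=> n; case: (Ha n).
  apply: (Un_cv_div_of_bounded_error (fun n => IZR (a n)) _ ((Rabs B + f g) / f g)) => n.
  have [_ Hn] := Ha n; rewrite f_hom in Hn.
  have -> : IZR (a n) - INR n * (f h / f g) = (IZR (a n) * f g - INR n * f h) / f g
    by field; lra.
  apply: Rabs_div_le => //.
  by have -> : (Rabs B + f g) / f g * f g = Rabs B + f g by field; lra.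
Qed.

End CoarseHeight.

Lemma half_space_filtration_height {X : Type} {H : Z -> X -> Prop} :
  half_space_filtration H -> forall a, exists n, height H a n.
Proof.
  move=> [Hnested [Hcap Hcup]] a.
  have Hdown j k : H (k + Z.of_nat j)%Z a -> H k a.
  { elim: j k => [|j IH] k; first by rewrite Z.add_0_r.
    move=> Hj; apply: IH; apply: (proj1 (Hnested _)).
    have -> : (k + Z.of_nat j + 1 = k + Z.of_nat (S j))%Z by lia.
    exact: Hj. }
  have [m Hm] : exists m, ~ H m a by apply: not_all_ex_not; exact: Hcap.
  have Hbound k : H k a -> (k < m)%Z.
  { move=> Hk; apply/Z.nle_gt => Hmk; apply: Hm; apply: (Hdown (Z.to_nat (k - m))).
    by have -> : (m + Z.of_nat (Z.to_nat (k - m)) = k)%Z by lia. }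
  have [n0 Hn0] := Hcup a.
  have [n [Hn Hmax]] := Z_least_elt (fun k => H (- k)%Z a) (- n0) (- m)
    ltac:(by rewrite /= Z.opp_involutive) (fun k Hk => ltac:(have := Hbound _ Hk; lia)).
  exists (- n)%Z; split => // k Hk.
  by have := Hmax (- k)%Z; rewrite /= Z.opp_involutive => /(_ Hk); lia.
Qed.

Definition displacement {G : groupType} {X : Type} (act : G -> X -> X) (hgt : X -> Z)
    (a : X) (x : G) : R :=
  IZR (hgt (act x a) - hgt a).

Section Displacement.
Context {G : groupType} {X : Type} {leX : X -> X -> Prop} {act : G -> X -> X}.
Context {hgt : X -> Z} {d w : R} (a0 : X).
Hypotheses (act1 : forall a, act 1%g a = a)
  (act_mul : forall x y a, act (x * y)%g a = act x (act y a))
  (leX_antisym : forall a b, leX a b -> leX b a -> a = b)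
  (height_gap : forall a b, w <= IZR (hgt a - hgt b) -> leX b a)
  (displacement_osc : forall x a b,
     Rabs (displacement act hgt a x - displacement act hgt b x) <= d).

Lemma displacement1 : displacement act hgt a0 1%g = 0.
Proof. by rewrite /displacement act1 Z.sub_diag. Qed.

Lemma displacement_mul x y :
  displacement act hgt a0 (x * y)%g
  = displacement act hgt (act y a0) x + displacement act hgt a0 y.
Proof. by rewrite /displacement act_mul !minus_IZR; ring. Qed.

Lemma displacement_quasimorphism x y :
  Rabs (displacement act hgt a0 (x * y)%g - displacement act hgt a0 x
        - displacement act hgt a0 y) <= d.
Proof.
  rewrite displacement_mul.
  have -> : forall u v t : R, u + t - v - t = u - v by move=> *; ring.
  exact: displacement_osc.
Qed.

Lemma induced_order_displacement_compatible :
  coarsely_compatible (induced_order leX act) (displacement act hgt a0) (Rabs w + 3 * d).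
Proof.
  have Hd : 0 <= d.
  { by have := displacement_osc 1%g a0 a0; rewrite Rminus_diag Rabs_R0. }
  have := Rle_abs w; have := Rabs_pos w => Hw0 Hw.
  split => x y.
  - move=> /(_ 1%g a0); rewrite !mul1g => Hxy.
    suff : IZR (hgt (act x a0) - hgt (act y a0)) <= Rabs w.
    { by rewrite /displacement !minus_IZR; lra. }
    apply: Rnot_lt_le => Hgt.
    have Hyx : leX (act y a0) (act x a0) by apply: height_gap; lra.
    by rewrite (leX_antisym _ _ Hxy Hyx) Z.sub_diag in Hgt; lra.
  - move=> Hlarge k z; rewrite !act_mul; apply: height_gap.
    (* The heights of k.y.z and k.x.z differ from phi y - phi x by at most 3d. *)
    have := Rabs_le_bounds (displacement_osc k (act y z) (act x z)).
    have := Rabs_le_bounds (displacement_osc y z a0).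
    have := Rabs_le_bounds (displacement_osc x z a0).
    move: Hlarge; rewrite /displacement !minus_IZR => *; lra.
Qed.

End Displacement.

Lemma quasi_total_order_height (G : groupType) (le : G -> G -> Prop) :
  quasi_total_order le ->
  exists (f : G -> R) (B : R), coarsely_compatible le f B /\ homogeneous f /\
    quasimorphism f /\ forall M, exists u, M <= f u.
Proof.
  move=> [X [leX [H [act [[[_ [leX_antisym _]] [Hfilt [w Hgap]]]
    [[act1 act_mul] [_ [[d Hqa] [[g0 [a0 [Hup _]]] Hiff]]]]]]]]].
  have [hgt hgtP] := functional_choice _ (half_space_filtration_height Hfilt).
  have Hosc x a b : Rabs (displacement act hgt a x - displacement act hgt b x) <= d.
  { have := Hqa x a b _ _ _ _ (hgtP _) (hgtP _) (hgtP _) (hgtP _).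
    rewrite /displacement -minus_IZR.
    by have -> : (hgt (act x a) - hgt a - (hgt (act x b) - hgt b)
      = hgt (act x a) - hgt (act x b) - (hgt a - hgt b))%Z by lia. }
  have Hgap_height a b : w <= IZR (hgt a - hgt b) -> leX b a.
  { by move=> Hab; apply: Hgap (hgtP a) (hgtP b) _; lra. }
  have [psi [Hhom [Hqm Hdist]]] :=
    homogenization (displacement_quasimorphism a0 act_mul Hosc) (displacement1 a0 act1).
  exists psi, (Rabs w + 3 * d + 2 * d); split; [|split; [|split]] => //.
  - have [Hmono Hlarge] := coarsely_compatible_perturb
      (induced_order_displacement_compatible a0 act_mul leX_antisym Hgap_height Hosc) Hdist.
    by split => x y; [move/Hiff/Hmono | move/Hlarge/Hiff].
  - move=> M; have [N HN] := Hup (up (M + d) + hgt a0)%Z.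
    have := HN N _ (Z.le_ge _ _ (Z.le_refl N)) (hgtP _) => /Z.ge_le /IZR_le.
    have [Hup_gt _] := archimed (M + d).
    have := Rabs_le_bounds (Hdist (zpowg g0 N)).
    rewrite /displacement plus_IZR minus_IZR => *.
    by exists (zpowg g0 N); lra.
Qed.

Lemma Int_part_bounds (r : R) : IZR (Int_part r) <= r < IZR (Int_part r) + 1.
Proof. by have := base_Int_part r; lra. Qed.

Definition graph_height {G : groupType} (f : G -> R) (a : G * Z) : Z :=
  (Int_part (f a.1) + a.2)%Z.

Definition graph_halfspace {G : groupType} (f : G -> R) (n : Z) (a : G * Z) : Prop :=
  (n <= graph_height f a)%Z.

Definition graph_order {G : groupType} (f : G -> R) (b a : G * Z) : Prop :=
  b = a \/ (graph_height f b < graph_height f a)%Z.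

Definition left_translation {G : groupType} (g : G) (a : G * Z) : G * Z := ((g * a.1)%g, a.2).

Lemma graph_halfspace_height {G : groupType} (f : G -> R) a n :
  height (graph_halfspace f) a n <-> n = graph_height f a.
Proof.
  rewrite /height /graph_halfspace; split => [[Hn Hmax]|->]; last by split; lia.
  by have := Hmax _ (Z.le_refl _); lia.
Qed.

Lemma graph_half_space_order {G : groupType} (f : G -> R) :
  half_space_order (graph_order f) (graph_halfspace f).
Proof.
  rewrite /graph_order; split; [split; [|split]|split].
  - by left.
  - by move=> a b [->|Hab] // [->|Hba] //; lia.
  - by move=> a b c [->|Hab] [<-|Hbc]; [left|right|right|right; lia].
  - rewrite /graph_halfspace; split; [|split].
    + move=> n; split; first by move=> a; lia.
      by exists (1%g, (n - Int_part (f 1%g))%Z); rewrite /graph_height /=; lia.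
    + by move=> a Hall; have := Hall (graph_height f a + 1)%Z; lia.
    + by move=> a; exists (graph_height f a); lia.
  - exists 1 => a b ha hb /graph_halfspace_height -> /graph_halfspace_height -> Hgap.
    by right; apply: lt_IZR; rewrite minus_IZR in Hgap; lra.
Qed.

Lemma left_translation_action (G : groupType) : group_action (@left_translation G).
Proof. by split=> [[x m]|g h [x m]]; rewrite /left_translation /= ?mul1g ?mulgA. Qed.

Lemma left_translation_effective (G : groupType) : effective_action (@left_translation G).
Proof. by move=> g /(_ (1%g, 0%Z)); rewrite /left_translation /= mulg1; case. Qed.

Section GraphOrder.
Context {G : groupType} {f : G -> R} {D : R}.
Hypotheses (f_hom : homogeneous f)
  (f_defect : forall x y, Rabs (f (x * y)%g - f x - f y) <= D).

Lemma left_translation_quasi_automorphism :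
  quasi_automorphism_action (graph_halfspace f) left_translation.
Proof.
  exists (2 * D + 2) => g [x m] [y m'] hga hgb ha hb.
  move=> /graph_halfspace_height -> /graph_halfspace_height ->.
  move=> /graph_halfspace_height -> /graph_halfspace_height ->.
  rewrite /graph_height /left_translation; cbn [fst snd].
  have := Rabs_le_bounds (f_defect g x); have := Rabs_le_bounds (f_defect g y).
  have := Int_part_bounds (f (g * x)%g); have := Int_part_bounds (f (g * y)%g).
  have := Int_part_bounds (f x); have := Int_part_bounds (f y).
  (* Generalized first, since [minus_IZR] would otherwise unfold [Int_part r = up r - 1]. *)
  move: (Int_part (f (g * x)%g)) (Int_part (f (g * y)%g)) (Int_part (f x)) (Int_part (f y)).
  move=> igx igy ix iy *; apply: Rabs_le; rewrite !minus_IZR !plus_IZR; lra.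
Qed.

Lemma left_translation_unbounded :
  nonzero_fun f -> unbounded_action (graph_halfspace f) left_translation.
Proof.
  have f_qm : quasimorphism f by exists D.
  move=> /(homogeneous_pos_value f_hom f_qm) [u Hu].
  exists u, (1%g, 0%Z).
  have Hheight n hn :
      height (graph_halfspace f) (left_translation (zpowg u n) (1%g, 0%Z)) hn ->
      hn = Int_part (IZR n * f u).
  { move=> /graph_halfspace_height ->.
    rewrite /graph_height /left_translation; cbn [fst snd].
    by rewrite mulg1 (homogeneous_zpowg f_hom f_qm) Z.add_0_r. }
  split => M.
  - have [N HN] := Z_archimedean _ (IZR M + 1) Hu.
    exists N => n hn /Z.ge_le /IZR_le Hn /Hheight ->.
    have := Int_part_bounds (IZR n * f u).
    by move=> Hbounds; apply/Z.le_ge/le_IZR; nra.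
  - have [N HN] := Z_archimedean _ (- IZR M) Hu.
    exists (- N)%Z => n hn /IZR_le Hn /Hheight ->.
    have := Int_part_bounds (IZR n * f u); rewrite opp_IZR in Hn.
    by move=> Hbounds; apply: le_IZR; nra.
Qed.

Lemma graph_order_quasi_total :
  nonzero_fun f -> quasi_total_order (induced_order (graph_order f) left_translation).
Proof.
  move=> Hnz; exists (G * Z)%type, (graph_order f), (graph_halfspace f), left_translation.
  split; first exact: graph_half_space_order.
  split; first exact: left_translation_action.
  split; first exact: left_translation_effective.
  split; first exact: left_translation_quasi_automorphism.
  by split; [exact: left_translation_unbounded | move=> g h].
Qed.

Lemma graph_order_compatible :
  coarsely_compatible (induced_order (graph_order f) left_translation) f (4 * D + 1).
Proof.
  have HD : 0 <= D by apply: Rle_trans (f_defect 1%g 1%g); apply: Rabs_pos.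
  split => x y.
  - move=> /(_ 1%g (1%g, 0%Z)).
    rewrite /graph_order /graph_height /left_translation; cbn [fst snd]; rewrite !mul1g !mulg1 => -[[->]|Hxy]; first lra.
    have := Int_part_bounds (f x); have := Int_part_bounds (f y).
    have : IZR (Int_part (f x)) + 1 <= IZR (Int_part (f y)).
    { by rewrite -plus_IZR; apply: IZR_le; lia. }
    lra.
  - move=> Hxy k [z m]; right.
    rewrite /graph_height /left_translation; cbn [fst snd].
    apply: Zplus_lt_compat_r; apply: lt_IZR.
    have := Rabs_le_bounds (f_defect (k * y)%g z); have := Rabs_le_bounds (f_defect k y).
    have := Rabs_le_bounds (f_defect (k * x)%g z); have := Rabs_le_bounds (f_defect k x).
    have := Int_part_bounds (f (k * x * z)%g); have := Int_part_bounds (f (k * y * z)%g).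
    move=> *; lra.
Qed.

End GraphOrder.

Theorem theorem1p3 (G : groupType) :
  (forall le : G -> G -> Prop,
     quasi_total_order le ->
     admissible le /\
     forall g : G, dominant le g ->
       exists gamma : G -> R,
         (forall h : G, growth le g h (gamma h)) /\
         nonzero_fun gamma /\ homogeneous gamma /\ quasimorphism gamma) /\
  (forall f : G -> R,
     nonzero_fun f -> homogeneous f -> quasimorphism f ->
     exists (le : G -> G -> Prop) (g : G),
       quasi_total_order le /\ dominant le g /\
       exists (c : R) (gamma : G -> R),
         (0 < c)%R /\
         (forall h : G, growth le g h (gamma h)) /\
         (forall h : G, f h = (c * gamma h)%R)).
Proof.
  split.
  - move=> le /quasi_total_order_height [f [B [Hcompat [Hhom [Hqm Hunb]]]]].
    have Hpos : exists u, 0 < f u by have [u Hu] := Hunb 1; exists u; lra.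
    split.
    + by have [g [_ Hdom]] := exists_dominant_of_height Hcompat Hhom Hpos; exists g.
    + move=> g Hdom.
      have Hg : 0 < f g.
      { apply: (dominant_height_pos Hcompat Hhom _ _ Hdom).
        by have [u Hu] := Hunb (B + 1); exists u; lra. }
      exists (fun h => f h / f g).
      split; first exact: growth_of_height Hcompat Hhom Hqm _ Hg Hdom.
      split; first by exists g; rewrite /Rdiv Rinv_r; lra.
      by split; [apply: homogeneous_div | apply: quasimorphism_div].
  - move=> f Hnz Hhom [D HD].
    have Hqm : quasimorphism f by exists D.
    have Hcompat := graph_order_compatible HD.
    have [g [Hg Hdom]] :=
      exists_dominant_of_height Hcompat Hhom (homogeneous_pos_value Hhom Hqm Hnz).
    exists (induced_order (graph_order f) left_translation), g.
    split; first exact: graph_order_quasi_total.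
    split => //; exists (f g), (fun h => f h / f g).
    split => //; split; first exact: growth_of_height Hcompat Hhom Hqm _ Hg Hdom.
    by move=> h; field; lra.
Qed.
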